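(* Let $\lambda_*>a_1,\dots,a_n$ be real, and let $(X_0,P_0)\in T^*V_{n,r}$ be real with $P_0$ belonging to the set $$\Big\{A^{1/2}(\lambda_* )\tilde X-\tfrac12X\big(\tilde X^TA^{1/2}(\lambda_* )X+X^TA^{1/2}(\lambda_* )\tilde X\big)\ :\ X^TX=\tilde X^T\tilde X=\mathbf I_r\Big\},$$ where $X=X_0$. Let $L(\lambda_* )$ be evaluated at $(X_0,P_0)$ and choose the branch of the discrete Neumann correspondence $\mathfrak B_r$ corresponding to a partition $\{w_1,\dots,w_r\mid-w_1,\dots,-w_r\}$ of its eigenvalues such that $w_1,\dots,w_r$ are pairwise distinct, $w_i+w_j\ne0$ and $w_i+\bar w_j\ne0$ for all $i,j=1,\dots,r$. Then the trajectory obtained from $(X_0,P_0)$ by iterating this branch is real.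
   Context: $A=\mathrm{diag}(a_1,\dots,a_n)$ real with distinct $a_i$, $A(\lambda)=\lambda\mathbf I_n-A$, $A^{1/2}(\lambda_* )=\mathrm{diag}(\sqrt{\lambda_*-a_i})$ with positive square roots. $T^*V_{n,r}=\{(X,P): X^TX=\mathbf I_r,\ X^TP+P^TX=0\}$. $L(\lambda)=\begin{pmatrix} X^TA(\lambda)^{-1}P & X^TA(\lambda)^{-1}X\\ \mathbf I_r-P^TA(\lambda)^{-1}P & -P^TA(\lambda)^{-1}X\end{pmatrix}$. For a partition $\{w_1,\dots,w_r\mid-w_1,\dots,-w_r\}$ of the eigenvalues of $L(\lambda_* )$ with the $w_i$ distinct and $w_i\ne-w_j$, let $\begin{pmatrix}\Xi\\ \Upsilon\end{pmatrix}$ be the matrix of eigenvectors with eigenvalues $w_1,\dots,w_r$ and $\Gamma=\Upsilon\Xi^{-1}$; the corresponding branch of $\mathfrak B_r$ is $\tilde X=A^{-1/2}(\lambda_* )(P+X\Gamma)$, $\tilde P=-A^{1/2}(\lambda_* )X+\tilde X\Gamma$, and iteration applies the same rule to the current point (the spectrum of $L(\lambda_* )$ being preserved). *)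

(* Complex numbers are modelled by an arbitrary
   numClosedFieldType C (e.g. the complex numbers); "real" means
   x \is Num.real. *)
From HB Require Import structures.
From mathcomp Require Import all_boot all_order all_algebra.
Set Implicit Arguments. Unset Strict Implicit. Unset Printing Implicit Defensive.
Import Order.TTheory GRing.Theory Num.Theory.
Local Open Scope ring_scope.

Section Neumann.
Variables (C : numClosedFieldType) (n r : nat).

Definition is_real_mx (m k : nat) (M : 'M[C]_(m, k)) : Prop :=
  forall i j, M i j \is Num.real.

Definition Ainv (a : 'I_n -> C) (lam : C) : 'M[C]_n :=
  diag_mx (\row_i (lam - a i)^-1).

Definition Ahalf (a : 'I_n -> C) (lam : C) : 'M[C]_n :=
  diag_mx (\row_i sqrtC (lam - a i)).

Definition Aneghalf (a : 'I_n -> C) (lam : C) : 'M[C]_n :=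
  diag_mx (\row_i (sqrtC (lam - a i))^-1).

Definition Lmat (a : 'I_n -> C) (lam : C) (X P : 'M[C]_(n, r)) : 'M[C]_(r + r) :=
  block_mx (X^T *m Ainv a lam *m P) (X^T *m Ainv a lam *m X)
           (1%:M - P^T *m Ainv a lam *m P) (- (P^T *m Ainv a lam *m X)).

(* One step of the branch of B_r determined by the eigenvalues w_1..w_r:
   V = (Xi ; Upsilon) has as j-th column an eigenvector of L(lam) for w_j,
   Gamma = Upsilon Xi^{-1}. *)
Definition neumann_step (a : 'I_n -> C) (lam : C) (w : 'I_r -> C)
    (X P X' P' : 'M[C]_(n, r)) : Prop :=
  exists V : 'M[C]_(r + r, r),
    [/\ Lmat a lam X P *m V = V *m diag_mx (\row_i w i),
        (forall j, col j V != 0),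
        usubmx V \in unitmx &
        let G := dsubmx V *m invmx (usubmx V) in
        X' = Aneghalf a lam *m (P + X *m G) /\
        P' = - (Ahalf a lam *m X) + X' *m G].

End Neumann.

(* For a real point
   (X, P), the matrix J L(lam) is symmetric, so eigenvectors of L(lam) whose
   eigenvalues never sum to zero are J-orthogonal: the span of the chosen
   eigenvectors V = (Xi; Upsilon) is Lagrangian, i.e. Gamma = Upsilon Xi^-1 is
   symmetric.  Since L(lam) is real, the conjugate of V spans the eigenvectors
   for the conjugate eigenvalues, and the condition w_i + conj(w_j) <> 0 makes
   V and conj(V) mutually J-orthogonal as well.  Both facts express Gamma and
   conj(Gamma) as Xi^-T Upsilon^T, so Gamma is real, and with it the next
   point of the branch. *)
From HB Require Import structures.
From mathcomp Require Import all_boot all_order all_algebra.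
Import Order.TTheory GRing.Theory Num.Theory Num.Def.
Set Implicit Arguments. Unset Strict Implicit.
Local Open Scope ring_scope.

Section Symplectic.
Variable R : nzRingType.

Definition Jmx r : 'M[R]_(r + r) := block_mx 0 1%:M (-1%:M) 0.

Lemma tr_Jmx r : (Jmx r)^T = - Jmx r.
Proof.
rewrite /Jmx tr_block_mx !trmx0 (raddfN (@trmx R _ _)) /= !trmx1.
by rewrite opp_block_mx oppr0 opprK.
Qed.

Lemma mul_tr_Jmx r (V U : 'M[R]_(r + r, r)) :
  V^T *m Jmx r *m U = (usubmx V)^T *m dsubmx U - (dsubmx V)^T *m usubmx U.
Proof.
rewrite -{1}(vsubmxK V) -{1}(vsubmxK U) tr_col_mx /Jmx mul_row_block.
rewrite !mulmx0 !addr0 !add0r mulmx1 mulmxN mulmx1 mul_row_col mulNmx.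
by rewrite addrC.
Qed.

End Symplectic.
Arguments Jmx {R} r.

Lemma eigenmx_Jmx_orthogonal (R : idomainType) r (L : 'M[R]_(r + r))
    (V U : 'M_(r + r, r)) (d e : 'I_r -> R) :
  (Jmx r *m L)^T = Jmx r *m L ->
  L *m V = V *m diag_mx (\row_i d i) -> L *m U = U *m diag_mx (\row_i e i) ->
  (forall i j, d i + e j != 0) -> V^T *m Jmx r *m U = 0.
Proof.
move=> JL_sym LV LU de_neq0; set K := V^T *m Jmx r *m U.
have K_e : V^T *m (Jmx r *m L) *m U = K *m diag_mx (\row_i e i).
  by rewrite !mulmxA -[V^T *m Jmx r *m L *m U]mulmxA LU !mulmxA.
have K_d : V^T *m (Jmx r *m L) *m U = - (diag_mx (\row_i d i) *m K).
  rewrite -{1}JL_sym trmx_mul tr_Jmx [V^T *m (L^T *m _)]mulmxA -trmx_mul LV.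
  by rewrite trmx_mul tr_diag_mx mulmxN mulNmx !mulmxA.
have K_de := etrans (esym K_e) K_d; clearbody K.
apply/matrixP=> i j; have := congr1 (fun M : 'M[R]_r => M i j) K_de.
rewrite mul_mx_diag mul_diag_mx !mxE => Kij.
have : (d i + e j) * K i j = 0 by rewrite mulrDl [e j * _]mulrC Kij addrN.
by move/eqP; rewrite mulf_eq0 (negbTE (de_neq0 i j)) => /eqP.
Qed.

Lemma slope_of_Jmx_orthogonal (R : comUnitRingType) r (V U : 'M[R]_(r + r, r)) :
  usubmx V \in unitmx -> usubmx U \in unitmx -> V^T *m Jmx r *m U = 0 ->
  dsubmx U *m invmx (usubmx U) = invmx (usubmx V)^T *m (dsubmx V)^T.
Proof.
rewrite mul_tr_Jmx => uV uU /eqP; rewrite subr_eq0 => /eqP VU.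
have uVT : (usubmx V)^T \in unitmx by rewrite unitmx_tr.
by rewrite -[dsubmx U](mulKmx uVT) VU -mulmxA (mulmxK uU).
Qed.

Section RealMatrices.
Variable C : numClosedFieldType.

Lemma is_real_mxE m k (M : 'M[C]_(m, k)) : is_real_mx M <-> map_mx conjC M = M.
Proof.
split=> [M_real|M_conj i j]; first by apply/matrixP=> i j; rewrite mxE; apply/CrealP.
by apply/CrealP; have := congr1 (fun M : 'M[C]_(m, k) => M i j) M_conj; rewrite mxE.
Qed.

Lemma is_real_mxD m k (A B : 'M[C]_(m, k)) :
  is_real_mx A -> is_real_mx B -> is_real_mx (A + B).
Proof. by move=> rA rB i j; rewrite mxE rpredD. Qed.

Lemma is_real_mxN m k (A : 'M[C]_(m, k)) : is_real_mx A -> is_real_mx (- A).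
Proof. by move=> rA i j; rewrite mxE rpredN. Qed.

Lemma is_real_mxB m k (A B : 'M[C]_(m, k)) :
  is_real_mx A -> is_real_mx B -> is_real_mx (A - B).
Proof. by move=> rA rB; apply: is_real_mxD (is_real_mxN _). Qed.

Lemma is_real_mxM m k p (A : 'M[C]_(m, k)) (B : 'M[C]_(k, p)) :
  is_real_mx A -> is_real_mx B -> is_real_mx (A *m B).
Proof. by move=> /is_real_mxE rA /is_real_mxE rB; apply/is_real_mxE; rewrite map_mxM rA rB. Qed.

Lemma is_real_trmx m k (A : 'M[C]_(m, k)) : is_real_mx A -> is_real_mx A^T.
Proof. by move=> rA i j; rewrite mxE. Qed.

Lemma is_real_mx1 m : is_real_mx (1%:M : 'M[C]_m).
Proof. by move=> i j; rewrite mxE rpred_nat. Qed.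

Lemma is_real_diag_mx m (f : 'I_m -> C) :
  (forall i, f i \is Num.real) -> is_real_mx (diag_mx (\row_i f i)).
Proof. by move=> f_real i j; rewrite !mxE rpredMn. Qed.

Lemma is_real_block_mx m1 m2 n1 n2 (A : 'M[C]_(m1, n1)) (B : 'M[C]_(m1, n2))
    (D : 'M[C]_(m2, n1)) (E : 'M[C]_(m2, n2)) :
  is_real_mx A -> is_real_mx B -> is_real_mx D -> is_real_mx E ->
  is_real_mx (block_mx A B D E).
Proof.
move=> /is_real_mxE rA /is_real_mxE rB /is_real_mxE rD /is_real_mxE rE.
by apply/is_real_mxE; rewrite map_block_mx rA rB rD rE.
Qed.

Lemma real_slope_of_eigenmx r (L : 'M[C]_(r + r)) (V : 'M_(r + r, r)) (w : 'I_r -> C) :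
  is_real_mx L -> (Jmx r *m L)^T = Jmx r *m L ->
  L *m V = V *m diag_mx (\row_i w i) -> usubmx V \in unitmx ->
  (forall i j, w i + w j != 0) -> (forall i j, w i + (w j)^* != 0) ->
  is_real_mx (dsubmx V *m invmx (usubmx V)).
Proof.
move=> /is_real_mxE L_real JL_sym LV uV w_neq0 wc_neq0.
have LVc : L *m map_mx conjC V = map_mx conjC V *m diag_mx (\row_i (w i)^*).
  rewrite -{1}L_real -map_mxM LV map_mxM map_diag_mx.
  by congr (_ *m diag_mx _); apply/matrixP=> i j; rewrite !mxE.
have uVc : usubmx (map_mx conjC V) \in unitmx by rewrite -map_usubmx map_unitmx.
have slope := slope_of_Jmx_orthogonal uV uV (eigenmx_Jmx_orthogonal JL_sym LV LV w_neq0).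
have slope_c := slope_of_Jmx_orthogonal uV uVc
  (eigenmx_Jmx_orthogonal JL_sym LV LVc wc_neq0).
by apply/is_real_mxE; rewrite map_mxM map_invmx map_dsubmx map_usubmx slope_c slope.
Qed.

End RealMatrices.

Lemma Jmx_Lmat_sym (C : numClosedFieldType) n r (a : 'I_n -> C) lam
    (X P : 'M[C]_(n, r)) :
  (Jmx r *m Lmat a lam X P)^T = Jmx r *m Lmat a lam X P.
Proof.
have AT : (Ainv a lam)^T = Ainv a lam by rewrite /Ainv tr_diag_mx.
rewrite /Jmx /Lmat mulmx_block !mul0mx !mul1mx !mulNmx !mul1mx !add0r !addr0.
rewrite tr_block_mx; congr block_mx.
- by rewrite (raddfB (@trmx C _ _)) /= trmx1 !trmx_mul AT trmxK mulmxA.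
- by rewrite (raddfN (@trmx C _ _)) /= !trmx_mul AT trmxK mulmxA.
- by rewrite (raddfN (@trmx C _ _)) /= !trmx_mul AT trmxK mulmxA.
- by rewrite (raddfN (@trmx C _ _)) /= !trmx_mul AT trmxK mulmxA.
Qed.

Section RealNeumannStep.
Variables (C : numClosedFieldType) (n r : nat) (a : 'I_n -> C) (lam : C).
Hypotheses (a_real : forall i, a i \is Num.real) (lam_real : lam \is Num.real).
Hypothesis a_lt_lam : forall i, a i < lam.

Let sqrt_real i : sqrtC (lam - a i) \is Num.real.
Proof. by apply: sqrtC_real; rewrite subr_ge0 ltW. Qed.

Lemma is_real_Ainv : is_real_mx (Ainv a lam).
Proof. by apply: is_real_diag_mx => i; rewrite realV rpredB. Qed.

Lemma is_real_Ahalf : is_real_mx (Ahalf a lam).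
Proof. exact: is_real_diag_mx. Qed.

Lemma is_real_Aneghalf : is_real_mx (Aneghalf a lam).
Proof. by apply: is_real_diag_mx => i; rewrite realV. Qed.

Lemma is_real_Lmat (X P : 'M[C]_(n, r)) :
  is_real_mx X -> is_real_mx P -> is_real_mx (Lmat a lam X P).
Proof.
move=> rX rP; have rA := is_real_Ainv.
have rXA : is_real_mx (X^T *m Ainv a lam) := is_real_mxM (is_real_trmx rX) rA.
have rPA : is_real_mx (P^T *m Ainv a lam) := is_real_mxM (is_real_trmx rP) rA.
apply: is_real_block_mx; do ?[exact: is_real_mxM | apply: is_real_mxN].
exact/is_real_mxB/is_real_mxM/rP/rPA/is_real_mx1.
Qed.

Lemma neumann_step_real (w : 'I_r -> C) (X P X' P' : 'M[C]_(n, r)) :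
  (forall i j, w i + w j != 0) -> (forall i j, w i + (w j)^* != 0) ->
  is_real_mx X -> is_real_mx P -> neumann_step a lam w X P X' P' ->
  is_real_mx X' /\ is_real_mx P'.
Proof.
move=> w_neq0 wc_neq0 rX rP [V [LV _ uV /= [-> ->]]].
have rG := real_slope_of_eigenmx (is_real_Lmat rX rP) (Jmx_Lmat_sym _ _ _ _) LV uV
  w_neq0 wc_neq0.
have rX' : is_real_mx (Aneghalf a lam *m (P + X *m (dsubmx V *m invmx (usubmx V)))).
  exact/is_real_mxM/is_real_mxD/is_real_mxM/rG/rX/rP/is_real_Aneghalf.
split=> //; apply: is_real_mxD; last exact: is_real_mxM.
exact/is_real_mxN/is_real_mxM/rX/is_real_Ahalf.
Qed.

End RealNeumannStep.

Theorem proposition6p5 (C : numClosedFieldType) (n r : nat)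
  (a : 'I_n -> C) (lam : C) (X0 P0 : 'M[C]_(n, r)) (w : 'I_r -> C)
  (Xs Ps : nat -> 'M[C]_(n, r)) :
  injective a ->
  (forall i, a i \is Num.real) -> lam \is Num.real ->
  (forall i, a i < lam) ->
  is_real_mx X0 -> is_real_mx P0 ->
  X0^T *m X0 = 1%:M -> X0^T *m P0 + P0^T *m X0 = 0 ->
  (exists Xt : 'M[C]_(n, r),
      [/\ is_real_mx Xt, Xt^T *m Xt = 1%:M &
          P0 = Ahalf a lam *m Xt
               - 2^-1 *: (X0 *m (Xt^T *m Ahalf a lam *m X0
                                 + X0^T *m Ahalf a lam *m Xt))]) ->
  char_poly (Lmat a lam X0 P0)
    = \prod_(i < r) (('X - (w i)%:P) * ('X + (w i)%:P)) ->
  injective w ->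
  (forall i j, w i + w j != 0) ->
  (forall i j, w i + (w j)^* != 0) ->
  Xs 0%N = X0 -> Ps 0%N = P0 ->
  (forall k, neumann_step a lam w (Xs k) (Ps k) (Xs k.+1) (Ps k.+1)) ->
  forall k, is_real_mx (Xs k) /\ is_real_mx (Ps k).
Proof.
(* The constraints on P0 and on the spectrum only guarantee that the branch
   exists; once its steps are given, realness needs just the eigenvalue conditions. *)
move=> _ a_real lam_real a_lt_lam rX0 rP0 _ _ _ _ _ w_neq0 wc_neq0 X_0 P_0 step.
elim=> [|k [rX rP]]; first by rewrite X_0 P_0.
exact: (neumann_step_real a_real lam_real a_lt_lam w_neq0 wc_neq0 rX rP (step k)).
Qed.
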